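(* Let $\mathcal{D}$ be an abstract system of proof notations and $s\in\mathbb{N}$. If $\mathcal{D}$ is $s$-bounded and $d\in\mathbb{E}(\mathcal{D})$, then every $d'\in\mathbb{E}(\mathcal{D})$ with $d\to^\ast d'$ (reflexive transitive closure of $\to$ in $\mathbb{E}(\mathcal{D})$) satisfies $|d'|\le\vartheta_d(s)$; i.e. the set $\{d'\in\mathbb{E}(\mathcal{D}): d\to^\ast d'\}$ is $\vartheta_d(s)$-bounded.
   Context: An abstract system of proof notations is a set $\mathcal{D}$ with functions $|\cdot|,o(\cdot)\colon\mathcal{D}\to\mathbb{N}\setminus\{0\}$ (size and height) and a relation $\to\subseteq\mathcal{D}\times\mathcal{D}$ such that $d\to d'$ implies $o(d')<o(d)$. The cut-elimination closure $\mathbb{E}(\mathcal{D})$ is the abstract system of formal terms inductively generated by: every $d\in\mathcal{D}$ is in $\mathbb{E}(\mathcal{D})$ (with size and height inherited); if $d,e\in\mathbb{E}(\mathcal{D})$ then $\mathsf{I}d,\ \mathsf{R}de,\ \mathsf{E}d\in\mathbb{E}(\mathcal{D})$ ($\mathsf I,\mathsf R,\mathsf E$ new symbols), with $|\mathsf Id|=|d|+1$, $|\mathsf Rde|=|d|+|e|+1$, $|\mathsf Ed|=|d|+1$, $o(\mathsf Id)=o(d)$, $o(\mathsf Rde)=o(d)+o(e)$, $o(\mathsf Ed)=2^{o(d)}-1$. The relation $\to$ on $\mathbb{E}(\mathcal{D})$ is inductively generated by: $d\to d'$ in $\mathcal{D}$ implies $d\to d'$; $d\to d'$ implies $\mathsf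 Id\to\mathsf Id'$; $e\to e'$ implies $\mathsf Rde\to\mathsf Rde'$; $d\to d'$ implies $\mathsf Ed\to\mathsf Ed'$; $\mathsf Rde\to\mathsf Id$ always; and $d\to d'$ together with $d\to d''$ implies $\mathsf Ed\to\mathsf R(\mathsf Ed')(\mathsf Ed'')$. The size function $\vartheta_d\colon\mathbb{N}\to\mathbb{N}$ for $d\in\mathbb{E}(\mathcal{D})$ is defined by recursion: $\vartheta_d(s)=s$ for $d\in\mathcal{D}$; $\vartheta_{\mathsf Id}(s)=\vartheta_d(s)+1$; $\vartheta_{\mathsf Rde}(s)=\max\{|d|+1+\vartheta_e(s),\ \vartheta_d(s)+1\}$; $\vartheta_{\mathsf Ed}(s)=o(d)\cdot(\vartheta_d(s)+2)$. A set of notations is called $s$-bounded if all its elements have size at most $s$. *)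

From Stdlib Require Import Arith Relations.

Record APNS : Type := {
  carrier :> Type;
  size : carrier -> nat;
  height : carrier -> nat;
  step : carrier -> carrier -> Prop;
  size_pos : forall d, 0 < size d;
  height_pos : forall d, 0 < height d;
  step_height : forall d d', step d d' -> height d' < height d
}.

(** Cut-elimination closure E(D): formal terms. *)
Inductive ETerm (D : APNS) : Type :=
| Base : carrier D -> ETerm D
| TI : ETerm D -> ETerm D
| TR : ETerm D -> ETerm D -> ETerm D
| TE : ETerm D -> ETerm D.

Arguments Base {D} _.
Arguments TI {D} _.
Arguments TR {D} _ _.
Arguments TE {D} _.

Fixpoint esize {D : APNS} (t : ETerm D) : nat :=
  match t with
  | Base d => size D d
  | TI d => esize d + 1
  | TR d e => esize d + esize e + 1
  | TE d => esize d + 1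
  end.

Fixpoint eheight {D : APNS} (t : ETerm D) : nat :=
  match t with
  | Base d => height D d
  | TI d => eheight d
  | TR d e => eheight d + eheight e
  | TE d => 2 ^ eheight d - 1
  end.

Inductive estep {D : APNS} : ETerm D -> ETerm D -> Prop :=
| estep_base : forall d d', step D d d' -> estep (Base d) (Base d')
| estep_I : forall d d', estep d d' -> estep (TI d) (TI d')
| estep_R : forall d e e', estep e e' -> estep (TR d e) (TR d e')
| estep_E : forall d d', estep d d' -> estep (TE d) (TE d')
| estep_RI : forall d e, estep (TR d e) (TI d)
| estep_ER : forall d d' d'', estep d d' -> estep d d'' ->
    estep (TE d) (TR (TE d') (TE d'')).

Fixpoint theta {D : APNS} (t : ETerm D) (s : nat) : nat :=
  match t with
  | Base _ => s
  | TI d => theta d s + 1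
  | TR d e => Nat.max (esize d + 1 + theta e s) (theta d s + 1)
  | TE d => eheight d * (theta d s + 2)
  end.

Definition bounded {X : Type} (sz : X -> nat) (P : X -> Prop) (s : nat) : Prop :=
  forall x, P x -> sz x <= s.

Definition sbounded (D : APNS) (s : nat) : Prop :=
  bounded (size D) (fun _ => True) s.

From Stdlib Require Import Arith Relations Lia.

(* Every reduction step [d -> d'] of E(D) satisfies [theta d' s <= theta d s], and
   [esize d <= theta d s] holds for every term once D is s-bounded; so the sizes of
   all reducts of [d] are bounded by [theta d s].  The only interesting step is
   [E d -> R (E d') (E d'')], where [theta] charges [o(d)] copies of [theta d s + 2]
   while each [E d'], [E d''] uses at most [o(d) - 1] of them, because reduction in
   E(D) strictly lowers the height. *)

Lemma pow2_add_le (a b h : nat) : a < h -> b < h -> 2 ^ a + 2 ^ b <= 2 ^ h.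
Proof.
  intros Ha Hb.
  assert (Hsplit : 2 ^ h = 2 * 2 ^ (h - 1)).
  { replace h with (S (h - 1)) at 1 by lia. apply Nat.pow_succ_r'. }
  assert (2 ^ a <= 2 ^ (h - 1)) by (apply Nat.pow_le_mono_r; lia).
  assert (2 ^ b <= 2 ^ (h - 1)) by (apply Nat.pow_le_mono_r; lia).
  lia.
Qed.

Section Closure.

Variable D : APNS.

Lemma eheight_pos (d : ETerm D) : 0 < eheight d.
Proof.
  induction d; simpl; try lia.
  - apply height_pos.
  - pose proof (Nat.pow_gt_lin_r 2 (eheight d)). lia.
Qed.

Lemma estep_eheight_lt (d d' : ETerm D) : estep d d' -> eheight d' < eheight d.
Proof.
  induction 1 as [d d' H | | | d d' H IH | d e | d d' d'' H' IH' H'' IH'']; simpl.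
  - now apply step_height.
  - lia.
  - lia.
  - pose proof (Nat.pow_lt_mono_r 2 _ _ ltac:(lia) IH).
    pose proof (Nat.pow_gt_lin_r 2 (eheight d')). lia.
  - pose proof (eheight_pos e). lia.
  - pose proof (pow2_add_le _ _ _ IH' IH'').
    pose proof (Nat.pow_gt_lin_r 2 (eheight d')).
    pose proof (Nat.pow_gt_lin_r 2 (eheight d'')). lia.
Qed.

Variable s : nat.
Hypothesis Hbounded : sbounded D s.

Lemma esize_le_theta (d : ETerm D) : esize d <= theta d s.
Proof.
  induction d; simpl.
  - now apply Hbounded.
  - lia.
  - lia.
  - pose proof (eheight_pos d). nia.
Qed.

Lemma theta_estep_le (d d' : ETerm D) : estep d d' -> theta d' s <= theta d s.
Proof.
  induction 1 as [| | | d d' H IH | | d d' d'' H' IH' H'' IH'']; simpl; try lia.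
  - pose proof (estep_eheight_lt _ _ H). apply Nat.mul_le_mono; lia.
  - pose proof (estep_eheight_lt _ _ H'). pose proof (estep_eheight_lt _ _ H'').
    pose proof (esize_le_theta d').
    apply Nat.max_lub; nia.
Qed.

Lemma theta_reduct_le (d d' : ETerm D) :
  clos_refl_trans (ETerm D) estep d d' -> theta d' s <= theta d s.
Proof.
  induction 1; [now apply theta_estep_le | lia | lia].
Qed.

End Closure.

Theorem mainTheorem6 (D : APNS) (s : nat) :
  sbounded D s ->
  forall d : ETerm D,
    bounded esize (fun d' => clos_refl_trans (ETerm D) estep d d') (theta d s).
Proof.
  intros Hs d d' Hred.
  pose proof (esize_le_theta D s Hs d').
  pose proof (theta_reduct_le D s Hs d d' Hred).
  lia.
Qed.
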